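(* It holds that $$\mathrm{cl}\,\mathrm{conv}(P^B\setminus C)=\mathrm{cl}\,\mathrm{conv}(P^B\setminus T^C)=\mathrm{cl}\,\mathrm{conv}(P^B\setminus R^C).$$
   Context: Let $A\in\mathbb{R}^{m\times n}$ have full row rank, $b\in\mathbb{R}^m$, and $P=\{x\in\mathbb{R}^n_+ : Ax=b\}$. Let $C\subseteq\mathbb{R}^n$ be an open convex set. Fix a basis $B$ of $P$ with nonbasic set $N=\{1,\dots,n\}\setminus B$. Write $P=\{x: x_i=\bar b_i-\sum_{j\in N}\bar a_{ij}x_j\ (i\in B),\ x_j\ge0\ (j=1,\dots,n)\}$ with $\bar b\ge0$. The basic solution $\bar x$ has $\bar x_i=\bar b_i$ ($i\in B$) and $\bar x_i=0$ ($i\in N$). $P^B$ is obtained by dropping $x_i\ge0$ for $i\in B$. For $j\in N$, $\bar r^j$ has $\bar r^j_k=-\bar a_{kj}$ ($k\in B$), $\bar r^j_j=1$, and $\bar r^j_k=0$ otherwise. Thus $P^B=\{\bar x+\sum_{j\in N}x_j\bar r^j:x_j\ge0\}$. It is assumed that $\bar x\notin\mathrm{cl}(C)$. For $j\in N$, $\alpha_j=\inf\{\lambda\ge0:\bar x+\lambda\bar r^j\in C\}$ and $\beta_j=\sup\{\lambda\ge0:\bar x+\lambda\bar r^j\in C\}$, with $\alpha_j=+\infty$, $\beta_j=-\infty$ if that halfline misses $C$. The set $N$ is partitioned into - $N_0=\{j:\alpha_j=+\infty,\beta_j=-\infty\}$, - $N_1=\{j:\alpha_j\in(0,\infty),\beta_j=+\infty\}$,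 - $N_2=\{j:\alpha_j\in(0,\infty),\beta_j\in(\alpha_j,\infty)\}$. For a set $K$, $\mathrm{recc}(K)=\{d:x+\lambda d\in K\ \forall x\in K,\lambda\ge0\}$. Define - $T=\{\bar x\}+\mathrm{conv}\big(\bigcup_{j\in N_1\cup N_2}\{\lambda\bar r^j:\alpha_j<\lambda<\beta_j\}\big)$ and $T^C=T+\mathrm{recc}(C)$; - $R=\{\bar x\}+\mathrm{conv}\big(\bigcup_{j\in N_1}\{\lambda\bar r^j:\alpha_j<\lambda<\beta_j\}\big)$ and $R^C=R+\mathrm{recc}(C)$. Here $\mathrm{cl}\,\mathrm{conv}$ denotes the closure of the convex hull. *)

(* Points of R^n are column vectors 'cV[R]_n,
   with the (product/sup-norm) topology of matrix_normedtype. *)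
From HB Require Import structures.
From mathcomp Require Import all_boot all_order all_algebra.
From mathcomp Require Import all_classical all_reals all_analysis.
Set Implicit Arguments. Unset Strict Implicit. Unset Printing Implicit Defensive.
Import Order.TTheory GRing.Theory Num.Theory numFieldNormedType.Exports.
Local Open Scope classical_set_scope.
Local Open Scope ring_scope.

Section Defs.
Variable R : realType.

Definition is_convex {n : nat} (S : set 'cV[R]_n) : Prop :=
  forall x y (t : R), S x -> S y -> 0 <= t -> t <= 1 -> S (t *: x + (1 - t) *: y).

Definition convhull {n : nat} (S : set 'cV[R]_n) : set 'cV[R]_n :=
  [set x | exists (k : nat) (p : 'I_k -> 'cV[R]_n) (w : 'I_k -> R),
     [/\ forall i, S (p i), forall i, 0 <= w i, \sum_(i < k) w i = 1
       & x = \sum_(i < k) w i *: p i]].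

Definition recc {n : nat} (K : set 'cV[R]_n) : set 'cV[R]_n :=
  [set d | forall x (l : R), K x -> 0 <= l -> K (x + l *: d)].

Definition msum {n : nat} (S T : set 'cV[R]_n) : set 'cV[R]_n :=
  [set x + y | x in S & y in T].

Variables (m n : nat) (A : 'M[R]_(m, n)) (b : 'cV[R]_m) (f : 'I_m -> 'I_n).
(* The basis B = image of the injective f; f i is the basic variable of row i. *)
Definition basisB : set 'I_n := [set f i | i in [set: 'I_m]].
Definition nonbasic : set 'I_n := ~` basisB.

Definition AB : 'M[R]_m := colsub f A.
Definition abar : 'M[R]_(m, n) := invmx AB *m A.
Definition bbar : 'cV[R]_m := invmx AB *m b.

Definition xbar : 'cV[R]_n :=
  \col_k (if [pick i | f i == k] is Some i then bbar i 0 else 0).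

Definition rbar (j : 'I_n) : 'cV[R]_n :=
  \col_k (if [pick i | f i == k] is Some i then - abar i j
          else if k == j then 1 else 0).

(* P^B : drop x_i >= 0 for basic i *)
Definition PB : set 'cV[R]_n :=
  [set x | A *m x = b /\ forall j, nonbasic j -> 0 <= x j 0].

Variable C : set 'cV[R]_n.

Definition alpha (j : 'I_n) : \bar R :=
  ereal_inf [set (l%:E) | l in [set l : R | 0 <= l /\ C (xbar + l *: rbar j)]].
Definition beta (j : 'I_n) : \bar R :=
  ereal_sup [set (l%:E) | l in [set l : R | 0 <= l /\ C (xbar + l *: rbar j)]].

Definition N0 : set 'I_n :=
  [set j | nonbasic j /\ alpha j = +oo%E /\ beta j = -oo%E].
Definition N1 : set 'I_n :=
  [set j | nonbasic j /\ (0 < alpha j < +oo)%E /\ beta j = +oo%E].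
Definition N2 : set 'I_n :=
  [set j | nonbasic j /\ (0 < alpha j < +oo)%E /\ (alpha j < beta j < +oo)%E].

Definition segs (J : set 'I_n) : set 'cV[R]_n :=
  [set v | exists j, exists l : R,
     [/\ J j, (alpha j < l%:E)%E, (l%:E < beta j)%E & v = l *: rbar j]].

Definition Tset : set 'cV[R]_n := [set xbar + v | v in convhull (segs (N1 `|` N2))].
Definition TC : set 'cV[R]_n := msum Tset (recc C).
Definition Rset : set 'cV[R]_n := [set xbar + v | v in convhull (segs N1)].
Definition RC : set 'cV[R]_n := msum Rset (recc C).

End Defs.

From HB Require Import structures.
From mathcomp Require Import all_boot all_order all_algebra.
From mathcomp Require Import all_classical all_reals all_analysis.
From mathcomp Require Import ring lra.
Set Implicit Arguments. Unset Strict Implicit. Unset Printing Implicit Defensive.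
Import Order.TTheory GRing.Theory Num.Theory numFieldNormedType.Exports.
Local Open Scope classical_set_scope.
Local Open Scope ring_scope.

(* Each segment [{l r^j : alpha_j < l < beta_j}] lies in [C - xbar] by convexity of [C], hence
   so does [T - xbar]; adding recession directions of [C] stays in [C], so [R^C <= T^C <= C]
   and [P^B \ C <= P^B \ T^C <= P^B \ R^C]. It remains to put [P^B \ R^C] inside the closed
   convex set [K = cl conv (P^B \ C)]. If [x] in [P^B] is not in [K], separate it from [K] by
   a hyperplane [c]: every point of [P^B] with [c.p <= c.x] lies in [C], and [c.xbar > c.x].
   Write [x = xbar + sum_j x_j r^j]. A ray with [c.r^j < 0] crosses the hyperplane and stays
   in [C] afterwards, so [j] is in [N_1]. A suitable convex combination [v] of the crossing
   points has [c.(xbar + v) = c.x], and [d = x - xbar - v] is a nonnegative combination of rays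
   with [c.d = 0]; so the half-line [xbar + v + t d] stays in [P^B] on the hyperplane, hence
   in [C], and [d] is a recession direction of the open convex set [C]. Thus [x] is in [R^C]. *)

Section ConvexHull.
Variables (R : realType) (n : nat).
Local Notation V := 'cV[R]_n.

Lemma subset_convhull (S : set V) : S `<=` convhull S.
Proof.
move=> x Sx; exists 1%N, (fun=> x), (fun=> 1); split => //.
- by rewrite big_ord1.
- by rewrite big_ord1 scale1r.
Qed.

Lemma convhullS (S S' : set V) : S `<=` S' -> convhull S `<=` convhull S'.
Proof.
by move=> SS' x [k [p [w [Sp w0 w1 ->]]]]; exists k, p, w; split => // i; apply: SS'.
Qed.

Lemma convhull_sub_convex (S Y : set V) : is_convex Y -> S `<=` Y -> convhull S `<=` Y.
Proof.
move=> cY SY x [k [p [w [Sp w0 w1 ->]]]].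
elim: k p w Sp w0 w1 => [|k IH] p w Sp w0 w1.
  by move: w1; rewrite big_ord0 => /eqP; rewrite eq_sym oner_eq0.
rewrite big_ord_recl; rewrite big_ord_recl in w1.
set s := \sum_(i < k) w (lift ord0 i) in w1 *.
have s0 : 0 <= s by apply: sumr_ge0 => i _; apply: w0.
have w0E : w ord0 = 1 - s by rewrite -w1 addrK.
have [s_eq0 | s_gt0] := eqVneq s 0.
  rewrite big1 => [|i _]; first by rewrite addr0 w0E s_eq0 subr0 scale1r; apply: SY.
  by rewrite (psumr_eq0P (fun i _ => w0 (lift ord0 i)) s_eq0) ?scale0r.
have {}s_gt0 : 0 < s by rewrite lt_def s_gt0.
have Ytail : Y (\sum_(i < k) (w (lift ord0 i) / s) *: p (lift ord0 i)).
  apply: IH => [i|i|]; first exact: Sp.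
    by rewrite divr_ge0 ?w0 ?ltW.
  by rewrite -mulr_suml divff ?gt_eqF.
have -> : \sum_(i < k) w (lift ord0 i) *: p (lift ord0 i) =
    s *: \sum_(i < k) (w (lift ord0 i) / s) *: p (lift ord0 i).
  by rewrite scaler_sumr; apply: eq_bigr => i _; rewrite scalerA mulrC divfK ?gt_eqF.
have w0_le1 : w ord0 <= 1 by rewrite w0E lerBlDr lerDl.
rewrite [X in _ + X *: _](_ : s = 1 - w ord0); last by rewrite w0E; ring.
exact: cY (SY _ (Sp ord0)) Ytail (w0 ord0) w0_le1.
Qed.

Lemma convex_convhull (S : set V) : is_convex (convhull S).
Proof.
move=> x y t [k1 [p1 [w1 [S1 w10 w11 ->]]]] [k2 [p2 [w2 [S2 w20 w21 ->]]]] t0 t1.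
have E1 i : fintype.split (lshift k2 i) = inl i := unsplitK (inl i).
have E2 i : fintype.split (rshift k1 i) = inr i := unsplitK (inr i).
exists (k1 + k2)%N,
  (fun i => match fintype.split i with inl a => p1 a | inr a => p2 a end),
  (fun i => match fintype.split i with inl a => t * w1 a | inr a => (1 - t) * w2 a end).
split.
- by move=> i; case: (fintype.split i).
- by move=> i; case: (fintype.split i) => a; apply: mulr_ge0; rewrite ?subr_ge0.
- rewrite big_split_ord /=; under eq_bigr do rewrite E1; under [X in _ + X]eq_bigr do rewrite E2.
  by rewrite -!mulr_sumr w11 w21 !mulr1 addrC subrK.
- rewrite big_split_ord /= !scaler_sumr.
  by congr (_ + _); apply: eq_bigr => i _; rewrite ?E1 ?E2 scalerA.
Qed.

Lemma convhull_sum (S : set V) k (P : pred 'I_k) (w : 'I_k -> R) (p : 'I_k -> V) :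
  (forall i, P i -> S (p i)) -> (forall i, P i -> 0 <= w i) ->
  \sum_(i | P i) w i = 1 -> convhull S (\sum_(i | P i) w i *: p i).
Proof.
move=> Sp w0 w1.
have [i0 Pi0] : exists i0, P i0.
  apply: contrapT => noP; move: w1; rewrite big_pred0 => [/eqP|i].
    by rewrite eq_sym oner_eq0.
  by apply/negP => Pi; apply: noP; exists i.
exists k, (fun i => if P i then p i else p i0), (fun i => if P i then w i else 0).
split.
- by move=> i; case: ifP => [/Sp | _] //; apply: Sp Pi0.
- by move=> i; case: ifP => // /w0.
- by rewrite -big_mkcond.
- by rewrite big_mkcond; apply: eq_bigr => i _; case: ifP; rewrite ?scale0r.
Qed.

Lemma convex_closure (Y : set V) : is_convex Y -> is_convex (closure Y).
Proof.
move=> cY x y t cx cy t0 t1 B /nbhs_ballP[e /= e0 eB].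
have [x' [Yx' /= xx']] := cx _ (nbhsx_ballx x e e0).
have [y' [Yy' /= yy']] := cy _ (nbhsx_ballx y e e0).
exists (t *: x' + (1 - t) *: y'); split; first exact: cY.
apply: eB; move: xx' yy'; rewrite -!ball_normE /= => xx' yy'.
have -> : t *: x + (1 - t) *: y - (t *: x' + (1 - t) *: y') =
    t *: (x - x') + (1 - t) *: (y - y') by rewrite opprD addrACA -!scalerBr.
apply: le_lt_trans (ler_normD _ _) _; rewrite !normrZ !ger0_norm ?subr_ge0 //.
set M := Num.max `|x - x'| `|y - y'|.
have : M < e by rewrite gt_max xx' yy'.
have : t * `|x - x'| <= t * M by rewrite ler_wpM2l // le_max lexx.
have : (1 - t) * `|y - y'| <= (1 - t) * M.
  by rewrite ler_wpM2l ?subr_ge0 // le_max lexx orbT.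
lra.
Qed.

Lemma closure_convhull_sandwich (S S' : set V) :
  S `<=` S' -> S' `<=` closure (convhull S) ->
  closure (convhull S') = closure (convhull S).
Proof.
move=> SS' S'cl; apply/seteqP; split; last exact/closureS/convhullS.
rewrite [X in _ `<=` X](closure_id _).1; last exact: closed_closure.
by apply/closureS/(convhull_sub_convex _ S'cl)/convex_closure/convex_convhull.
Qed.

End ConvexHull.

Section Recession.
Variables (R : realType) (n : nat).
Local Notation V := 'cV[R]_n.

(* For [y] in the open set [C], a point [y'] slightly beyond [y] on the line from [p] is in [C]
   too, and [y + l d] is a convex combination of [y'] and a far point [p + (l / eta) d]. *)
Lemma open_convex_recc (C : set V) p d : open C -> is_convex C ->
  (forall t, 0 <= t -> C (p + t *: d)) -> recc C d.
Proof.
move=> Copen Cconv Cray y l Cy l0.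
have /nbhs_ballP[e /= e0 eC] : nbhs y C by move: Copen; rewrite openE => /(_ _ Cy).
set M := `|y - p| + 1.
have M0 : 0 < M by rewrite /M ltr_wpDl.
set eta := e / (e + M).
have eM0 : 0 < e + M by rewrite addr_gt0.
have eta0 : 0 < eta by rewrite divr_gt0.
have eta1 : eta < 1 by rewrite /eta ltr_pdivrMr // mul1r ltrDl.
set y' := y + (eta / (1 - eta)) *: (y - p).
have Cy' : C y'.
  apply: eC; rewrite -ball_normE /= /y' opprD addrA subrr add0r normrN normrZ.
  have -> : eta / (1 - eta) = e / M by rewrite /eta; field; rewrite ?gt_eqF.
  rewrite ger0_norm ?divr_ge0 ?ltW // mulrAC ltr_pdivrMr // ltr_pM2l //.
  by rewrite /M ltrDl.
have -> : y + l *: d = (1 - eta) *: y' + (1 - (1 - eta)) *: (p + (l / eta) *: d).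
  by apply/matrixP => i k; rewrite /y' !mxE; field; rewrite ?gt_eqF ?subr_gt0.
apply: Cconv Cy' _ _ _; try lra.
exact/Cray/(divr_ge0 l0 (ltW eta0)).
Qed.

End Recession.

Section Ray.
Variables (R : realType) (n : nat) (C : set 'cV[R]_n) (x0 r : 'cV[R]_n).

(* [alpha A b f C j] and [beta A b f C j] are [ray_inf] and [ray_sup] for [x0 := xbar A b f]
   and [r := rbar A f j]. *)
Definition ray_hits : set R := [set l | 0 <= l /\ C (x0 + l *: r)].
Local Notation ray_inf := (ereal_inf [set l%:E | l in ray_hits]).
Local Notation ray_sup := (ereal_sup [set l%:E | l in ray_hits]).

Lemma ray_inf_gt0 : ~ closure C x0 -> (0 < ray_inf)%E.
Proof.
move=> x0_ncl.
have [B [/nbhs_ballP[e /= e0 eB] CB0]] : exists B, nbhs x0 B /\ ~ (C `&` B !=set0).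
  apply: contrapT => nex; apply: x0_ncl => B nB.
  by apply: contrapT => CB0; apply: nex; exists B.
have r1 : 0 < `|r| + 1 by rewrite ltr_wpDl.
apply: (@lt_le_trans _ _ (e / (`|r| + 1))%:E); first by rewrite lte_fin divr_gt0.
apply/ereal_infP => _ [l [l0 Cl] <-]; rewrite lee_fin leNgt; apply/negP => le.
apply: CB0; exists (x0 + l *: r); split => //; apply: eB.
rewrite -ball_normE /= opprD addrA subrr add0r normrN normrZ ger0_norm //.
rewrite ltr_pdivlMr // in le; apply: le_lt_trans le.
by rewrite ler_wpM2l // lerDl.
Qed.

Lemma ray_inf_lt l : open C -> ~ C x0 -> ray_hits l -> (ray_inf < l%:E)%E.
Proof.
move=> Copen x0_nC [l0 Cl].
have l_gt0 : 0 < l.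
  rewrite lt_def l0 andbT; apply/eqP => l_eq0.
  by apply: x0_nC; rewrite l_eq0 scale0r addr0 in Cl.
have /nbhs_ballP[e /= e0 eC] : nbhs (x0 + l *: r) C.
  by move: Copen; rewrite openE => /(_ _ Cl).
have r1 : 0 < `|r| + 1 by rewrite ltr_wpDl.
set k := e / (`|r| + 1).
have k0 : 0 < k by rewrite divr_gt0.
have kr : k * `|r| < e.
  by rewrite -[X in _ < X](@divfK _ (`|r| + 1)) ?gt_eqF // ltr_pM2l // ltrDl.
set eta := Num.min l k / 2.
have m0 : 0 < Num.min l k by rewrite lt_min l_gt0 k0.
have ml : Num.min l k <= l by rewrite ge_min lexx.
have mk : Num.min l k <= k by rewrite ge_min lexx orbT.
have r0 := normr_ge0 r.
have eta_l : eta < l by rewrite /eta; lra.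
have eta_r : eta * `|r| < e by rewrite /eta; nra.
have eta0 : 0 < eta by rewrite /eta; lra.
apply: (@le_lt_trans _ _ (l - eta)%:E); last by rewrite lte_fin gtrBl.
apply: ereal_inf_lbound; exists (l - eta) => //; split; first by rewrite subr_ge0 ltW.
apply: eC; rewrite -ball_normE /=.
have -> : x0 + l *: r - (x0 + (l - eta) *: r) = eta *: r.
  by apply/matrixP => i j; rewrite !mxE; ring.
by rewrite normrZ gtr0_norm.
Qed.

Lemma ray_sup_pinfty l0 : 0 <= l0 -> (forall l, l0 <= l -> C (x0 + l *: r)) ->
  ray_sup = +oo%E.
Proof.
move=> l00 Cray; apply/eqyP => A _.
have hit : ray_hits (Num.max l0 A).
  by split; [rewrite le_max l00 | apply: Cray; rewrite le_max lexx].
apply: le_trans (ereal_sup_ubound (ex_intro2 _ _ _ hit erefl)).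
by rewrite lee_fin le_max lexx orbT.
Qed.

Lemma ray_between l : is_convex C ->
  (ray_inf < l%:E)%E -> (l%:E < ray_sup)%E -> C (x0 + l *: r).
Proof.
move=> Cconv /ereal_inf_lt[_ [l1 [l10 Cl1] <-] l1l] /ereal_sup_gt[_ [l2 [l20 Cl2] <-] ll2].
rewrite !lte_fin in l1l ll2.
have l21 : 0 < l2 - l1 by rewrite subr_gt0 (lt_trans l1l).
set t := (l2 - l) / (l2 - l1).
have -> : x0 + l *: r = t *: (x0 + l1 *: r) + (1 - t) *: (x0 + l2 *: r).
  by apply/matrixP => i c; rewrite !mxE /t; field; rewrite gt_eqF.
apply: Cconv Cl1 Cl2 _ _.
- by apply: divr_ge0 _ (ltW l21); rewrite subr_ge0 ltW.
- by rewrite ler_pdivrMr // mul1r lerD2l lerN2 ltW.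
Qed.

End Ray.

Section Separation.
Variables (R : realType) (n : nat).
Local Notation V := 'cV[R]_n.

Definition dot (c y : V) : R := \sum_i c i 0 * y i 0.

Lemma dotC (c y : V) : dot c y = dot y c.
Proof. by apply: eq_bigr => i _; rewrite mulrC. Qed.

Lemma dotDr (c u v : V) : dot c (u + v) = dot c u + dot c v.
Proof. by rewrite /dot -big_split; apply: eq_bigr => i _; rewrite mxE mulrDr. Qed.

Lemma dotZr (c : V) a (u : V) : dot c (a *: u) = a * dot c u.
Proof. by rewrite /dot mulr_sumr; apply: eq_bigr => i _; rewrite mxE mulrCA. Qed.

Lemma dotBr (c u v : V) : dot c (u - v) = dot c u - dot c v.
Proof. by rewrite /dot -sumrB; apply: eq_bigr => i _; rewrite !mxE mulrBr. Qed.

Lemma dot_sumr (c : V) I (r : seq I) (P : pred I) (F : I -> V) :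
  dot c (\sum_(j <- r | P j) F j) = \sum_(j <- r | P j) dot c (F j).
Proof.
rewrite /dot; under eq_bigr do rewrite summxE mulr_sumr.
by rewrite exchange_big.
Qed.

Lemma dot_self_ge0 (v : V) : 0 <= dot v v.
Proof. by apply: sumr_ge0 => i _; rewrite -expr2 sqr_ge0. Qed.

Lemma sqr_coord_le_dot (v : V) i : v i 0 ^+ 2 <= dot v v.
Proof.
by rewrite /dot (bigD1 i) //= -expr2 lerDl; apply: sumr_ge0 => j _; rewrite -expr2 sqr_ge0.
Qed.

Lemma dot_self_gt0 (v : V) : v != 0 -> 0 < dot v v.
Proof.
move=> /eqP v_neq0.
have [i vi] : exists i, v i 0 != 0.
  apply: contrapT => /forallNP v0; apply: v_neq0; apply/matrixP => i j.
  by rewrite (ord1 j) mxE; apply: contrapT => vi; apply: (v0 i); apply/eqP.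
by apply: lt_le_trans (sqr_coord_le_dot v i); rewrite lt_def sqrf_eq0 vi sqr_ge0.
Qed.

Lemma continuous_sqdist (x : V) : continuous (fun p : V => dot (p - x) (p - x)).
Proof.
apply: continuous_big => [|i _]; first exact: add_continuous.
have -> : (fun p : V => (p - x) i 0 * (p - x) i 0) =
    (fun p : V => p i 0 - x i 0) \* (fun p : V => p i 0 - x i 0).
  by apply: funext => p; rewrite /= !mxE.
move=> p; have cp : {for p, continuous (fun q : V => q i 0 - x i 0)}.
  by apply: continuousB; [exact: coord_continuous | exact: cst_continuous].
exact: (continuousM cp cp).
Qed.

Lemma trmx_continuous (p q : nat) : continuous (@trmx R p q).
Proof.
move=> M; apply/(@cvg_mx_entourageP _ q p (trmx @ nbhs M) _ M^T) => E entE.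
have := (@cvg_mx_entourageP _ _ _ (nbhs M) (nbhs_filter M) M).1 (@cvg_id _ _) E entE.
by apply: filterS => N NM i j; rewrite !mxE; apply: NM.
Qed.

Lemma compact_cV_box (x : V) (e : R) :
  compact [set p : V | forall i, `|p i 0 - x i 0| <= e].
Proof.
pose box i := `[x i 0 - e, x i 0 + e]%classic.
have -> : [set p : V | forall i, `|p i 0 - x i 0| <= e] =
    trmx @` [set v : 'rV[R]_n | forall i, box i (v ord0 i)].
  apply/seteqP; split => [p pe | _ [v vb <-] i].
    by exists p^T; rewrite ?trmxK // => i; rewrite /box /= in_itv /= mxE -ler_distlC distrC.
  by move: (vb i); rewrite /box /= in_itv /= mxE -ler_distlC distrC.
apply: continuous_compact; first exact/continuous_subspaceT/trmx_continuous.
by apply: rV_compact => i; apply: segment_compact.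
Qed.

Lemma closed_nearest_point (X : set V) (x : V) : closed X -> X !=set0 ->
  exists2 p, X p & forall q, X q -> dot (p - x) (p - x) <= dot (q - x) (q - x).
Proof.
move=> Xcl [x0 Xx0]; set g := fun p : V => dot (p - x) (p - x).
have g_ge0 p : 0 <= g p by apply: dot_self_ge0.
(* it suffices to minimise [g] over the compact part of [X] in a box around [x],
   outside of which [g] exceeds [g x0] *)
set rho := 1 + g x0.
set box := [set p : V | forall i, `|p i 0 - x i 0| <= rho].
have far q : ~ box q -> g x0 < g q.
  move=> /existsNP[i /negP]; rewrite -ltNge => rho_lt.
  apply: lt_le_trans (sqr_coord_le_dot _ i); rewrite !mxE -real_normK ?num_real //.
  by have := g_ge0 x0; move: rho_lt; rewrite /rho; nra.
have box_x0 : box x0.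
  by apply: contrapT => /far; rewrite ltxx.
have [p [bp Xp] pmin] : exists2 p, (box `&` X) p & forall q, (box `&` X) q -> g p <= g q.
  have [p Kp pmin] := compact_EVT_min (ex_intro _ x0 (conj box_x0 Xx0))
    (compact_closedI (@compact_cV_box x rho) Xcl) (continuous_subspaceT (@continuous_sqdist x)).
  by exists p; [rewrite inE in Kp | move=> q Kq; apply: pmin; rewrite inE].
exists p => // q Xq; have [bq | nbq] := pselect (box q); first exact: pmin.
by apply: le_trans (ltW (far _ nbq)); apply: pmin.
Qed.

Lemma nearest_point_obtuse (X : set V) (x p : V) : is_convex X -> X p ->
  (forall q, X q -> dot (p - x) (p - x) <= dot (q - x) (q - x)) ->
  forall q, X q -> 0 <= dot (q - p) (p - x).
Proof.
move=> Xconv Xp pmin q Xq; set L := dot (q - p) (p - x); set Q := dot (q - p) (q - p).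
have Q0 : 0 <= Q by apply: dot_self_ge0.
have expand t : dot (t *: q + (1 - t) *: p - x) (t *: q + (1 - t) *: p - x) =
    dot (p - x) (p - x) + 2 * t * L + t ^+ 2 * Q.
  rewrite /L /Q /dot !mulr_sumr -!big_split /=; apply: eq_bigr => i _.
  by rewrite !mxE; ring.
rewrite leNgt; apply/negP => L0.
(* moving from [p] towards [q] by [t] first decreases the distance to [x] *)
set t := - L / (Q - L).
have QL0 : 0 < Q - L by lra.
have t0 : 0 <= t by rewrite divr_ge0 ?oppr_ge0 ?ltW.
have t1 : t <= 1 by rewrite ler_pdivrMr // mul1r; lra.
have tQ : t * Q <= - L by rewrite mulrAC ler_pdivrMr //; nra.
have := pmin _ (Xconv _ _ _ Xq Xp t0 t1); rewrite expand.
have -> : t ^+ 2 * Q = t * (t * Q) by ring.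
have : 0 < t by rewrite divr_gt0 ?oppr_gt0.
nra.
Qed.

Lemma closed_convex_separation (X : set V) (x : V) :
  closed X -> is_convex X -> X !=set0 -> ~ X x -> exists c : V, forall q, X q -> dot c x < dot c q.
Proof.
move=> Xcl Xconv X0 Xx.
have [p Xp pmin] := closed_nearest_point x Xcl X0.
have px : p - x != 0 by rewrite subr_eq0; apply: contraPneq Xx => <-.
exists (p - x) => q Xq; rewrite -subr_gt0 -dotBr.
have -> : q - x = (q - p) + (p - x) by rewrite addrA subrK.
rewrite dotDr [dot _ (q - p)]dotC.
exact: ltr_wpDl (nearest_point_obtuse Xconv Xp pmin Xq) (dot_self_gt0 px).
Qed.

End Separation.

Section BasicSolution.
Variables (R : realType) (m n : nat) (A : 'M[R]_(m, n)) (b : 'cV[R]_m) (f : 'I_m -> 'I_n).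
Hypotheses (f_inj : injective f) (AB_unit : AB A f \in unitmx).
Local Notation xb := (xbar A b f).
Local Notation rb := (rbar A f).
Local Notation PBs := (PB A b f).

Definition nonbasicb (j : 'I_n) : bool := [pick i | f i == j] == None.

Lemma nonbasicP j : reflect (nonbasic f j) (nonbasicb j).
Proof.
apply: (iffP eqP) => [nbj [i _ fij] | nj].
  by move: nbj; case: pickP => // /(_ i); rewrite fij eqxx.
by case: pickP => // i /eqP fij; case: nj; exists i.
Qed.

Definition basic_embed : 'M[R]_(n, m) := \matrix_(k, i) (f i == k)%:R.

Lemma basic_embedE (w : 'cV[R]_m) k :
  (basic_embed *m w) k 0 = if [pick i | f i == k] is Some i then w i 0 else 0.
Proof.
rewrite mxE; case: pickP => [i /eqP fik | nb_k]; last first.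
  by rewrite big1 // => i _; rewrite mxE nb_k mul0r.
rewrite (bigD1 i) //= mxE fik eqxx mul1r big1 ?addr0 // => i' i'i.
rewrite mxE; case: eqP => [fi'k | _]; last by rewrite mul0r.
by case/eqP: i'i; apply: f_inj; rewrite fi'k.
Qed.

Lemma mul_basic_embed : A *m basic_embed = AB A f.
Proof.
apply/matrixP => r i; rewrite !mxE (bigD1 (f i)) //= mxE eqxx mulr1 big1 ?addr0 // => k ki.
by rewrite mxE eq_sym (negbTE ki) mulr0.
Qed.

Lemma xbarE : xb = basic_embed *m bbar A b f.
Proof. by apply/matrixP => k j; rewrite (ord1 j) basic_embedE mxE. Qed.

Lemma A_xbar : A *m xb = b.
Proof. by rewrite xbarE mulmxA mul_basic_embed /bbar mulmxA mulmxV // mul1mx. Qed.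

Lemma xbar_nonbasic k : nonbasicb k -> xb k 0 = 0.
Proof. by move=> /eqP nbk; rewrite mxE nbk. Qed.

Lemma rbar_nonbasic j k : nonbasicb k -> rb j k 0 = (k == j)%:R.
Proof. by move=> /eqP nbk; rewrite mxE nbk; case: eqP. Qed.

Lemma rbarE j : nonbasicb j -> rb j = delta_mx j 0 - basic_embed *m col j (abar A f).
Proof.
move=> /eqP nbj; apply/matrixP => k c; rewrite (ord1 c) mxE.
have entry P : (delta_mx j 0 - P) k 0 = (k == j)%:R - P k 0 by rewrite !mxE eqxx andbT.
rewrite entry basic_embedE; case: pickP => [i /eqP fik | nb_k]; last by rewrite subr0; case: eqP.
rewrite [(col _ _) _ _]mxE; case: eqP => [kj | _]; last by rewrite sub0r.
by move: nbj; case: pickP => // /(_ i); rewrite fik kj eqxx.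
Qed.

Lemma A_rbar j : nonbasicb j -> A *m rb j = 0.
Proof.
move=> nbj; rewrite rbarE // mulmxBr mulmxA mul_basic_embed !colE /abar.
by rewrite !mulmxA mulmxV // mul1mx subrr.
Qed.

Lemma PB_xbar : PBs xb.
Proof. by split; [exact: A_xbar | move=> k /nonbasicP nbk; rewrite xbar_nonbasic]. Qed.

Lemma PB_add_rays p (kap : 'I_n -> R) : PBs p ->
  (forall j, nonbasicb j -> 0 <= kap j) -> PBs (p + \sum_(j | nonbasicb j) kap j *: rb j).
Proof.
move=> [Ap p_ge0] kap_ge0; split.
  rewrite mulmxDr Ap mulmx_sumr big1 ?addr0 // => j nbj.
  by rewrite -scalemxAr A_rbar // scaler0.
move=> k /nonbasicP nbk; rewrite !mxE summxE; apply: addr_ge0; first exact/p_ge0/nonbasicP.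
apply: sumr_ge0 => j nbj; rewrite mxE rbar_nonbasic //.
by apply: mulr_ge0; [exact: kap_ge0 | exact: ler0n].
Qed.

Lemma PB_add_ray p j l : PBs p -> nonbasicb j -> 0 <= l -> PBs (p + l *: rb j).
Proof.
move=> Pp nbj l0; have := PB_add_rays (kap := fun k => (k == j)%:R * l) Pp.
rewrite (bigD1 j) //= eqxx mul1r big1 ?addr0 => [|k /andP[_ /negbTE ->]]; last first.
  by rewrite mul0r scale0r.
by apply=> k _; rewrite mulr_ge0 ?ler0n.
Qed.

Lemma PB_decomp x : PBs x -> x = xb + \sum_(j | nonbasicb j) x j 0 *: rb j.
Proof.
move=> [Ax x_ge0]; set y := xb + _.
have Ay : A *m y = b.
  rewrite mulmxDr A_xbar mulmx_sumr big1 ?addr0 // => j nbj.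
  by rewrite -scalemxAr A_rbar // scaler0.
have yx k : nonbasicb k -> y k 0 = x k 0.
  move=> nbk; rewrite /y [((_ + _ : 'cV[R]_n)) _ _]mxE summxE xbar_nonbasic // add0r (bigD1 k) //=.
  rewrite [((_ *: _ : 'cV[R]_n)) _ _]mxE rbar_nonbasic // eqxx mulr1 big1 ?addr0 //.
  move=> j /andP[_ jk].
  by rewrite [((_ *: _ : 'cV[R]_n)) _ _]mxE rbar_nonbasic // eq_sym (negbTE jk) mulr0.
(* [x - y] vanishes off the basis and lies in the kernel of [A], hence of [AB] *)
set w : 'cV[R]_m := \col_i (x - y) (f i) 0.
have xyE : x - y = basic_embed *m w.
  apply/matrixP => k c; rewrite (ord1 c) basic_embedE.
  case: pickP => [i /eqP <- | nb_k]; first by rewrite /w !mxE.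
  have subE (P Q : 'cV[R]_n) : (P - Q) k 0 = P k 0 - Q k 0 by rewrite !mxE.
  by rewrite subE yx ?subrr // /nonbasicb; case: pickP => // i; rewrite nb_k.
have : AB A f *m w = 0 by rewrite -mul_basic_embed -mulmxA -xyE mulmxBr Ax Ay subrr.
move/(congr1 (mulmx (invmx (AB A f)))); rewrite mulmxA mulVmx // mul1mx mulmx0 => w0.
by apply/eqP; rewrite -subr_eq0 xyE w0 mulmx0.
Qed.

End BasicSolution.

Section TC_RC.
Variables (R : realType) (m n : nat) (A : 'M[R]_(m, n)) (b : 'cV[R]_m) (f : 'I_m -> 'I_n).
Variable C : set 'cV[R]_n.
Hypotheses (f_inj : injective f) (AB_unit : AB A f \in unitmx).
Hypotheses (C_open : open C) (C_convex : is_convex C) (xbar_ncl : ~ closure C (xbar A b f)).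
Local Notation xb := (xbar A b f).
Local Notation rb := (rbar A f).
Local Notation PBs := (PB A b f).
Local Notation segs := (segs A b f C).

Let PB_xb : PBs xb := PB_xbar b f_inj AB_unit.

Lemma xbar_notin_C : ~ C xb.
Proof. by move=> /subset_closure. Qed.

Lemma segs_sub_C J v : segs J v -> C (xb + v).
Proof. by move=> [j [l [_ al lb ->]]]; apply: ray_between. Qed.

Lemma TC_sub_C : TC A b f C `<=` C.
Proof.
move=> _ [_ [v v_hull <-] [d d_recc <-]].
have C_xbv : C (xb + v).
  have xb_conv : is_convex [set u | C (xb + u)].
    move=> u1 u2 t Cu1 Cu2 t0 t1 /=.
    have -> : xb + (t *: u1 + (1 - t) *: u2) = t *: (xb + u1) + (1 - t) *: (xb + u2).
      by rewrite !scalerDr addrACA -scalerDl subrKC scale1r.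
    exact: C_convex.
  by apply: (convhull_sub_convex xb_conv _ v_hull) => u; apply: segs_sub_C.
by have := d_recc _ 1 C_xbv ler01; rewrite scale1r.
Qed.

Lemma RC_sub_TC : RC A b f C `<=` TC A b f C.
Proof.
move=> _ [_ [v v_hull <-] [d d_recc <-]]; exists (xb + v); last by exists d.
exists v => //; apply: convhullS v_hull => _ [j [l [N1j lt1 lt2 ->]]].
by exists j, l; split => //; left.
Qed.

Lemma segs_N1_ray j l : nonbasicb f j -> 0 <= l ->
  (forall l', l <= l' -> C (xb + l' *: rb j)) -> segs (N1 A b f C) (l *: rb j).
Proof.
move=> nbj l0 Cray.
have al : (alpha A b f C j < l%:E)%E.
  by apply: ray_inf_lt => //; [exact: xbar_notin_C | split => //; apply: Cray].
have be : beta A b f C j = +oo%E by apply: ray_sup_pinfty l0 Cray.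
exists j, l; split => //; last by rewrite be ltry.
split; first exact/nonbasicP.
by rewrite be; split => //; rewrite ray_inf_gt0 // (lt_trans al) ?ltry.
Qed.

Section SublevelWitness.
Variables (x c : 'cV[R]_n).
Hypotheses (PB_x : PBs x) (sublevel_C : forall p, PBs p -> dot c p <= dot c x -> C p).

(* [del] is the height of [xb] above the hyperplane [dot c y = dot c x]; a ray [j] in [S]
   crosses it at [lam j], and [v] is a convex combination of these crossing points whose
   coefficients on the rays are [nu]. *)
Let del := dot c xb - dot c x.
Let neg j := dot c (rb j) < 0.
Let S j := nonbasicb f j && neg j.
Let lam j := del / - dot c (rb j).
Let s := \sum_(j | S j) x j 0 * - dot c (rb j).
Let theta := del / s.
Let nu j := if neg j then theta * x j 0 else 0.

Lemma del_gt0 : 0 < del.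
Proof.
rewrite subr_gt0 ltNge; apply/negP => le_xb.
exact: xbar_notin_C (sublevel_C PB_xb le_xb).
Qed.

Lemma x_nonbasic_ge0 j : nonbasicb f j -> 0 <= x j 0.
Proof. by move=> /nonbasicP; case: PB_x => _; apply. Qed.

Lemma sum_S_dot : \sum_(j | S j) x j 0 * dot c (rb j) = - s.
Proof. by rewrite /s -sumrN; apply: eq_bigr => j _; rewrite mulrN opprK. Qed.

Lemma dot_x_decomp : dot c x = dot c xb + \sum_(j | nonbasicb f j) x j 0 * dot c (rb j).
Proof.
rewrite {1}(PB_decomp f_inj AB_unit PB_x) dotDr dot_sumr.
by under eq_bigr do rewrite dotZr.
Qed.

Lemma del_le_s : del <= s.
Proof.
have := dot_x_decomp; rewrite (bigID neg) /= sum_S_dot.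
set rest := \sum_(j | _ && ~~ neg j) _.
have : 0 <= rest.
  apply: sumr_ge0 => j /andP[nbj]; rewrite /neg -leNgt => dj.
  exact: mulr_ge0 (x_nonbasic_ge0 nbj) dj.
rewrite /del; lra.
Qed.

Lemma s_gt0 : 0 < s.
Proof. exact: lt_le_trans del_gt0 del_le_s. Qed.

Lemma nu_ge0 j : nonbasicb f j -> 0 <= nu j.
Proof.
move=> nbj; rewrite /nu; case: ifP => // _; apply: mulr_ge0 (x_nonbasic_ge0 nbj).
exact: divr_ge0 (ltW del_gt0) (ltW s_gt0).
Qed.

Lemma nu_le_x j : nonbasicb f j -> nu j <= x j 0.
Proof.
move=> nbj; rewrite /nu; case: ifP => _; last exact: x_nonbasic_ge0.
apply: ler_piMl (x_nonbasic_ge0 nbj) _.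
by rewrite ler_pdivrMr ?s_gt0 // mul1r del_le_s.
Qed.

Lemma ray_C_after_lam j : S j -> forall l, lam j <= l -> C (xb + l *: rb j).
Proof.
move=> /andP[nbj dj] l lam_l; have dj' : 0 < - dot c (rb j) by rewrite oppr_gt0.
have lam0 : 0 <= lam j by apply: divr_ge0 (ltW del_gt0) (ltW dj').
apply: sublevel_C; first exact: PB_add_ray PB_xb nbj (le_trans lam0 lam_l).
rewrite dotDr dotZr; rewrite /lam ler_pdivrMr // /del in lam_l; lra.
Qed.

Let v := \sum_(j | S j) (x j 0 * - dot c (rb j) / s) *: (lam j *: rb j).

Lemma v_convhull : convhull (segs (N1 A b f C)) v.
Proof.
apply: convhull_sum => [j Sj | j /andP[nbj dj] |].
- apply: segs_N1_ray (andP Sj).1 _ (ray_C_after_lam Sj).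
  by apply: divr_ge0 (ltW del_gt0) _; rewrite oppr_ge0 ltW //; case/andP: Sj.
- apply: divr_ge0 (ltW s_gt0); apply: mulr_ge0 (x_nonbasic_ge0 nbj) _.
  by rewrite oppr_ge0 ltW.
- by rewrite -mulr_suml divff // gt_eqF ?s_gt0.
Qed.

Lemma vE : v = \sum_(j | nonbasicb f j) nu j *: rb j.
Proof.
rewrite /v big_mkcondr /=; apply: eq_bigr => j _; rewrite /nu.
case: ifP => [dj | _]; last by rewrite scale0r.
rewrite scalerA /lam /theta; congr (_ *: _); field.
by rewrite gt_eqF ?s_gt0 // lt_eqF.
Qed.

Let d := x - (xb + v).

Lemma dE : d = \sum_(j | nonbasicb f j) (x j 0 - nu j) *: rb j.
Proof.
rewrite /d {1}(PB_decomp f_inj AB_unit PB_x) vE opprD addrACA subrr add0r -sumrB.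
by apply: eq_bigr => j _; rewrite scalerBl.
Qed.

Lemma dot_d : dot c d = 0.
Proof.
have dot_v : dot c v = - del.
  rewrite vE dot_sumr.
  transitivity (theta * \sum_(j | S j) x j 0 * dot c (rb j)).
    rewrite mulr_sumr big_mkcondr /=; apply: eq_bigr => j _.
    by rewrite dotZr /nu; case: ifP; rewrite ?mul0r ?mulr0 // mulrA.
  by rewrite sum_S_dot mulrN divfK ?gt_eqF ?s_gt0.
by rewrite /d dotBr dotDr dot_v /del; ring.
Qed.

(* [xb + v + t d] stays in [PB] and on the hyperplane through [x] *)
Lemma d_recc : recc C d.
Proof.
apply: (open_convex_recc (p := xb + v)) => // t t0.
apply: sublevel_C.
  rewrite vE -addrA dE scaler_sumr -big_split /=.
  rewrite (eq_bigr (fun j => (nu j + t * (x j 0 - nu j)) *: rb j)).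
    apply: PB_add_rays => // j nbj.
    by rewrite addr_ge0 ?nu_ge0 // mulr_ge0 // subr_ge0 nu_le_x.
  by move=> j _; rewrite scalerA scalerDl.
rewrite dotDr dotZr dot_d mulr0 addr0 -[xb + v](subKr x) -/d.
by rewrite dotBr dot_d subr0.
Qed.

Lemma RC_of_sublevel : RC A b f C x.
Proof.
exists (xb + v); first by exists v => //; apply: v_convhull.
by exists d; [exact: d_recc | rewrite /d subrKC].
Qed.

End SublevelWitness.

Lemma PB_notin_RC_closure x : PBs x -> ~ RC A b f C x -> closure (convhull (PBs `\` C)) x.
Proof.
move=> PB_x x_nRC; apply: contrapT => x_ncl.
have hull0 : closure (convhull (PBs `\` C)) !=set0.
  by exists xb; apply/subset_closure/subset_convhull; split; [exact: PB_xb | exact: xbar_notin_C].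
have [c sep] := closed_convex_separation (@closed_closure _ _)
  (convex_closure (convex_convhull (S := PBs `\` C))) hull0 x_ncl.
apply/x_nRC/(RC_of_sublevel (c := c) PB_x) => p PB_p le_px; apply: contrapT => p_nC.
have := sep p (subset_closure (subset_convhull (conj PB_p p_nC))).
by rewrite ltNge le_px.
Qed.

End TC_RC.

Theorem theorem2 (R : realType) (m n : nat) (A : 'M[R]_(m, n)) (b : 'cV[R]_m)
    (f : 'I_m -> 'I_n) (C : set 'cV[R]_n) :
  \rank A = m ->
  injective f ->
  AB A f \in unitmx ->
  (forall i, 0 <= bbar A b f i 0) ->
  open C -> is_convex C ->
  ~ closure C (xbar A b f) ->
  closure (convhull (PB A b f `\` C)) = closure (convhull (PB A b f `\` TC A b f C)) /\
  closure (convhull (PB A b f `\` C)) = closure (convhull (PB A b f `\` RC A b f C)).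
Proof.
(* the rank condition follows from [AB A f \in unitmx], and the sign of [bbar] is
   irrelevant because [PB] drops the basic sign constraints *)
move=> _ f_inj AB_unit _ C_open C_convex xbar_ncl.
have sub_TC : PB A b f `\` C `<=` PB A b f `\` TC A b f C.
  by move=> p [PB_p p_nC]; split => // /(TC_sub_C C_convex).
have sub_RC : PB A b f `\` TC A b f C `<=` PB A b f `\` RC A b f C.
  by move=> p [PB_p p_nTC]; split => // /RC_sub_TC.
have RC_cl : PB A b f `\` RC A b f C `<=` closure (convhull (PB A b f `\` C)).
  by move=> p [PB_p p_nRC]; apply: PB_notin_RC_closure.
split; apply/esym/closure_convhull_sandwich.
- exact: sub_TC.
- by move=> p /sub_RC; apply: RC_cl.
- exact: subset_trans sub_TC sub_RC.
- exact: RC_cl.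
Qed.
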